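(* Consider a trajectory of the no-slip billiard in a solid cylinder $\mathcal{B}\subset\mathbb{R}^n$ with axis vector $e$, the particle being subject to the constant force $-mge$. Then the sequence of longitudinal positions $h_i$ satisfies $$h_i=h_{i-1}+\mathbbm{1}^\dagger\Big(t_{i-1}\Lambda_{i-1}+\frac{t_{i-1}^2}{2}\Phi\Big),\qquad \Lambda_i=\mathcal{A}_i\big(\Lambda_{i-1}+t_{i-1}\Phi\big),$$ with initial conditions $\Lambda_0$ and $h_0$.
   Context: The particle is a ball of radius $r>0$ with rotationally symmetric mass distribution of total mass $m$ and second-moment matrix per unit mass $\lambda I$, $\lambda=(r\gamma)^2/2$, $\gamma>0$; $c=\frac{1-\gamma^2}{1+\gamma^2}$, $s=\frac{2\gamma}{1+\gamma^2}$; $(a\wedge b)x=(a\cdot x)b-(b\cdot x)a$. The solid cylinder is $\mathcal{B}=\overline{\mathcal{B}}\times\mathbb{R}e$ with $\overline{\mathcal{B}}\subset W:=e^\perp$ (the set of admissible centers); $\nu_a\in W$ is the inward unit normal at a regular boundary point $a$. A state is $(a,u,U)$, $u$ the center-of-mass velocity, $U\in\mathfrak{so}(n)$ the angular velocity matrix. Between collisions $U$ is constant and the center of mass moves with acceleration $-ge$; at a collision at $a$ the pre-collision $(u,U)$ is replaced by $C_a(u,U)=\big(cu-\tfrac{s}{\gamma}(u\cdot\nu_a)\nu_a+s\gamma rU\nu_a,\ \tfrac{s}{\gamma r}\nu_a\wedge u+U-\tfrac{s}{\gamma}\nu_a\wedge U\nu_a\big)$. For the $j$th collision ($j=0,1,\dots$)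 at $a_j$, let $(u_j,U_j)$ be the post-collision velocities, $t_j$ the time from the $j$th to the $(j+1)$st collision, $h_j=a_j\cdot e$, $\sigma_j=u_j\cdot e$, $w_j=\gamma rU_je\in W$, and $\Lambda_j=(\sigma_j,w_j)\in\mathbb{R}\oplus W\cong\mathbb{R}^n$. Let $\mathbbm{1}=(1,0)\in\mathbb{R}\oplus W$ and $\Phi=-g\mathbbm{1}$. For a boundary point $a$ let $W_a=\{w\in W:w\cdot\nu_a=0\}$, $\Pi_a$ the orthogonal projection onto $W_a$, and $\mathcal{A}(a)$ the linear map of $\mathbb{R}\oplus W$ with block matrix $\begin{pmatrix}c&-s\nu_a^\dagger\\-s\nu_a&-c\nu_a\nu_a^\dagger+\Pi_a\end{pmatrix}$; $\mathcal{A}_i=\mathcal{A}(a_i)$. *)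

From mathcomp Require Import all_boot all_algebra.
Set Implicit Arguments. Unset Strict Implicit. Unset Printing Implicit Defensive.
Import GRing.Theory Num.Theory.
Local Open Scope ring_scope.

Section NoSlip.
Variables (R : realFieldType) (n : nat).
Notation vec := 'cV[R]_n.

Definition dot (x y : vec) : R := (x^T *m y) 0 0.

(* (a /\ b) x = (a.x) b - (b.x) a, as the matrix b a^T - a b^T *)
Definition wedge (a b : vec) : 'M[R]_n := b *m a^T - a *m b^T.

Definition skew (U : 'M[R]_n) : Prop := U^T = - U.

Definition cc (gamma : R) : R := (1 - gamma ^+ 2) / (1 + gamma ^+ 2).
Definition ss (gamma : R) : R := (2 * gamma) / (1 + gamma ^+ 2).

Definition collision (gamma r : R) (nu : vec) (uU : vec * 'M[R]_n)
  : vec * 'M[R]_n :=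
  let: (u, U) := uU in
  (cc gamma *: u - (ss gamma / gamma * dot u nu) *: nu
     + (ss gamma * gamma * r) *: (U *m nu),
   (ss gamma / (gamma * r)) *: wedge nu u + U
     - (ss gamma / gamma) *: wedge nu (U *m nu)).

Definition cyl (Bbar : vec -> Prop) (e : vec) (x : vec) : Prop :=
  exists b l, Bbar b /\ x = b + l *: e.

Definition on_boundary (K : vec -> Prop) (x : vec) : Prop :=
  K x /\ forall eps : R, 0 < eps ->
    exists y, ~ K y /\ dot (y - x) (y - x) < eps ^+ 2.

(* R (+) W, elements written as pairs (sigma, w) *)
Definition lam_add (x y : R * vec) : R * vec := (x.1 + y.1, x.2 + y.2).
Definition lam_scale (k : R) (x : R * vec) : R * vec := (k * x.1, k *: x.2).
Definition one_dag (x : R * vec) : R := x.1.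
Definition Phi (g : R) : R * vec := (- g, 0).

(* Orthogonal projection of R^n onto W_a = {w in e^perp | w . nu = 0}
   (e, nu orthonormal) *)
Definition Pi (e nu : vec) (w : vec) : vec :=
  w - dot w nu *: nu - dot w e *: e.

(* The linear map A(a) of R (+) W with block matrix
   [[c, -s nu^T], [-s nu, -c nu nu^T + Pi_a]] *)
Definition Amap (gamma : R) (e nu : vec) (x : R * vec) : R * vec :=
  (cc gamma * x.1 - ss gamma * dot nu x.2,
   - (ss gamma * x.1) *: nu - (cc gamma * dot nu x.2) *: nu + Pi e nu x.2).

(* A trajectory of the no-slip billiard with collisions j = 0..N:
   a j = j-th collision point, (u j, U j) post-collision velocities,
   t j time between collision j and j+1; nu is the inward unit normal field. *)
Definition noslip_trajectory (Bbar : vec -> Prop) (e : vec) (nu : vec -> vec)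
  (r gamma g : R) (N : nat) (a u : nat -> vec) (U : nat -> 'M[R]_n)
  (t : nat -> R) : Prop :=
  (forall j, (j <= N)%N -> skew (U j) /\ on_boundary (cyl Bbar e) (a j)) /\
  (forall j, (j < N)%N ->
     0 < t j /\
     (forall tau, 0 <= tau <= t j ->
        cyl Bbar e (a j + tau *: u j - (tau ^+ 2 / 2 * g) *: e)) /\
     a j.+1 = a j + t j *: u j - (t j ^+ 2 / 2 * g) *: e /\
     (u j.+1, U j.+1) = collision gamma r (nu (a j.+1))
                          (u j - (t j * g) *: e, U j)).

Definition hh (e : vec) (a : nat -> vec) (j : nat) : R := dot (a j) e.
Definition Lam (e : vec) (r gamma : R) (u : nat -> vec) (U : nat -> 'M[R]_n)
  (j : nat) : R * vec := (dot (u j) e, (gamma * r) *: (U j *m e)).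

End NoSlip.

From mathcomp Require Import all_boot all_algebra.
From mathcomp Require Import ring lra.
(* Imported after MathComp, whose own [skew] would otherwise shadow the one of Defs. *)
From Pilot Require Import Defs.
Import GRing.Theory Num.Theory.
Local Open Scope ring_scope.
Set Implicit Arguments. Unset Strict Implicit.

(* Between collisions U is constant and e is a unit vector, so the flight
   changes (sigma, w) only by t Phi and h by t sigma - t^2 g / 2.  At a
   collision, U e is orthogonal to e (U is skew) and nu is orthogonal to e,
   so the components of the collision map along e are a linear function of
   (sigma, w) alone, namely A(a). *)

Section DotProduct.
Variables (R : realFieldType) (n : nat).
Implicit Types (x y z : 'cV[R]_n) (k : R).

Lemma dotC x y : dot x y = dot y x.
Proof.
rewrite /dot -[in RHS](trmxK x) -trmx_mul [RHS]mxE; congr (_ _ _); apply: val_inj.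
Qed.

Lemma dotDr x y z : dot x (y + z) = dot x y + dot x z.
Proof. by rewrite /dot mulmxDr mxE. Qed.

Lemma dotZr x y k : dot x (k *: y) = k * dot x y.
Proof. by rewrite /dot -scalemxAr mxE. Qed.

Lemma dotNr x y : dot x (- y) = - dot x y.
Proof. by rewrite -scaleN1r dotZr mulN1r. Qed.

Lemma dotBr x y z : dot x (y - z) = dot x y - dot x z.
Proof. by rewrite dotDr dotNr. Qed.

Lemma dotDl x y z : dot (y + z) x = dot y x + dot z x.
Proof. by rewrite !(dotC _ x) dotDr. Qed.

Lemma dotZl x y k : dot (k *: y) x = k * dot y x.
Proof. by rewrite !(dotC _ x) dotZr. Qed.

Lemma dotNl x y : dot (- y) x = - dot y x.
Proof. by rewrite !(dotC _ x) dotNr. Qed.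

Lemma dotBl x y z : dot (y - z) x = dot y x - dot z x.
Proof. by rewrite !(dotC _ x) dotBr. Qed.

Lemma dot_mulmxl (A : 'M[R]_n) x y : dot (A *m x) y = dot x (A^T *m y).
Proof. by rewrite /dot trmx_mul mulmxA. Qed.

Lemma wedge_mulmx x y z : wedge x y *m z = dot x z *: y - dot y z *: x.
Proof.
rewrite /wedge mulmxBl -!mulmxA /dot.
by rewrite {1}(mx11_scalar (x^T *m z)) {1}(mx11_scalar (y^T *m z)) !mul_mx_scalar.
Qed.

Lemma skew_dot_mulmxl (U : 'M[R]_n) x y :
  skew U -> dot (U *m x) y = - dot x (U *m y).
Proof. by move=> skU; rewrite dot_mulmxl skU mulNmx dotNr. Qed.

Lemma skew_dot_mulmx_self (U : 'M[R]_n) x : skew U -> dot (U *m x) x = 0.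
Proof.
move=> skU; have := skew_dot_mulmxl x x skU.
by rewrite [in RHS]dotC; lra.
Qed.

End DotProduct.

Section AxialState.
Variables (R : realFieldType) (n : nat) (e : 'cV[R]_n) (r gamma : R).

Definition axial_state (uU : 'cV[R]_n * 'M[R]_n) : R * 'cV[R]_n :=
  (dot uU.1 e, (gamma * r) *: (uU.2 *m e)).

Lemma Lam_axial_state (u : nat -> 'cV[R]_n) (U : nat -> 'M[R]_n) j :
  Lam e r gamma u U j = axial_state (u j, U j).
Proof. by []. Qed.

Hypothesis e_unit : dot e e = 1.

Lemma axial_state_flight u U (t g : R) :
  axial_state (u - (t * g) *: e, U)
  = lam_add (axial_state (u, U)) (lam_scale t (Phi n g)).
Proof.
rewrite /axial_state /lam_add /lam_scale /= scaler0 addr0.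
by rewrite dotBl dotZl e_unit mulrN mulr1.
Qed.

Lemma height_flight x uU (t g : R) :
  dot (x + t *: uU.1 - (t ^+ 2 / 2 * g) *: e) e
  = dot x e + one_dag (lam_add (lam_scale t (axial_state uU))
                               (lam_scale (t ^+ 2 / 2) (Phi n g))).
Proof. by rewrite /one_dag /= dotBl dotDl !dotZl e_unit; ring. Qed.

End AxialState.

Section CollisionMap.
Variables (R : realFieldType) (n : nat) (e nu : 'cV[R]_n) (r gamma : R).
Hypotheses (gamma_neq0 : gamma != 0) (r_neq0 : r != 0).
Hypothesis nu_perp_e : dot nu e = 0.

Lemma axial_state_collision u U : skew U ->
  axial_state e r gamma (collision gamma r nu (u, U))
  = Amap gamma e nu (axial_state e r gamma (u, U)).
Proof.
move=> skU.
have sq_neq0 : 1 + gamma ^+ 2 != 0 by rewrite lt0r_neq0 // ltr_pwDl // sqr_ge0.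
have Ue_perp_e : dot (U *m e) e = 0 by exact: skew_dot_mulmx_self.
have Unu_e : dot (U *m nu) e = - dot nu (U *m e) by exact: skew_dot_mulmxl.
rewrite /axial_state /Amap /=; congr (_, _).
  rewrite !(dotDl, dotNl, dotZl) Unu_e nu_perp_e dotZr /cc /ss.
  by field; rewrite sq_neq0 gamma_neq0.
rewrite /Pi !(mulmxDl, mulNmx) -!scalemxAl !wedge_mulmx.
rewrite !(dotZl, dotZr) nu_perp_e Ue_perp_e Unu_e (dotC (U *m e)) !scale0r.
apply/matrixP => i j; rewrite !mxE /cc /ss.
by field; rewrite sq_neq0 gamma_neq0 r_neq0.
Qed.

End CollisionMap.

Theorem proposition5p1 (R : realFieldType) (n : nat) (e : 'cV[R]_n)
  (Bbar : 'cV[R]_n -> Prop) (nu : 'cV[R]_n -> 'cV[R]_n) (r gamma g : R)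
  (N : nat) (a u : nat -> 'cV[R]_n) (U : nat -> 'M[R]_n) (t : nat -> R) :
  dot e e = 1 ->
  (forall b, Bbar b -> dot b e = 0) ->
  (forall x, on_boundary (cyl Bbar e) x ->
     dot (nu x) e = 0 /\ dot (nu x) (nu x) = 1) ->
  0 < r -> 0 < gamma ->
  noslip_trajectory Bbar e nu r gamma g N a u U t ->
  forall i, (i < N)%N ->
    hh e a i.+1 = hh e a i
      + one_dag (lam_add (lam_scale (t i) (Lam e r gamma u U i))
                         (lam_scale (t i ^+ 2 / 2) (Phi n g)))
    /\ Lam e r gamma u U i.+1
       = Amap gamma e (nu (a i.+1))
           (lam_add (Lam e r gamma u U i) (lam_scale (t i) (Phi n g))).
Proof.
move=> e_unit _ nu_normal r_gt0 gamma_gt0 [onB step] i lt_iN.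
have [_ [_ [a_next uU_next]]] := step i lt_iN.
have [skUi _] := onB i (ltnW lt_iN).
have [nu_perp_e _] := nu_normal _ (proj2 (onB i.+1 lt_iN)).
split; first by rewrite /hh a_next (height_flight r gamma e_unit _ (u i, U i)).
rewrite !Lam_axial_state uU_next -axial_state_flight //.
by apply: axial_state_collision => //; apply: lt0r_neq0.
Qed.
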